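(* Let $n\ge2$ and let $P\in\mathrm{Mat}(n^2,\mathbb{C})$ be an orthogonal projection ($P^*=P$, $P^2=P$) of rank $r$. With $P_1=P\otimes I_n$, $P_2=I_n\otimes P$ and $t_m=\operatorname{tr}_3\big((P_1P_2)^m\big)$, define $$F[P]=(rn-t_1)(t_2-t_3)-(t_1-t_2)^2 .$$ Then $F[P]\ge 0$.
   Context: $I_n$ is the $n\times n$ identity matrix, $\otimes$ is the Kronecker product, and $\operatorname{tr}_3$ is the matrix trace on $\mathrm{Mat}(n^3,\mathbb{C})$; $(P_1P_2)^m$ is the $m$-th power of the matrix $P_1P_2$. *)

From HB Require Import structures.
From mathcomp Require Import all_boot all_order all_algebra.
From mathcomp Require Export mxtens.
Set Implicit Arguments. Unset Strict Implicit. Unset Printing Implicit Defensive.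
Import Order.TTheory GRing.Theory Num.Theory.
Local Open Scope ring_scope.

(* Kronecker product: [tensmx] from mathcomp-real-closed (mxtens.v),
   with the standard convention (A *t B) (i*p+k) (j*q+l) = A i j * B k l. *)

Definition adjmx (C : numClosedFieldType) (m n : nat) (A : 'M[C]_(m, n)) : 'M[C]_(n, m) :=
  \matrix_(i, j) (A j i)^*.

Definition P1 (C : numClosedFieldType) (n : nat) (P : 'M[C]_(n * n)) : 'M[C]_(n * n * n) :=
  tensmx P (1%:M : 'M[C]_n).

(* P_2 = I_n (x) P, cast from index type n*(n*n) to (n*n)*n (associativity of (x)) *)
Definition P2 (C : numClosedFieldType) (n : nat) (P : 'M[C]_(n * n)) : 'M[C]_(n * n * n) :=
  castmx (mulnA n n n, mulnA n n n) (tensmx (1%:M : 'M[C]_n) P).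

Definition tP (C : numClosedFieldType) (n : nat) (P : 'M[C]_(n * n)) (m : nat) : C :=
  \tr (iter m (fun M => (P1 P *m P2 P) *m M) (1%:M : 'M[C]_(n * n * n))).

Definition FP (C : numClosedFieldType) (n r : nat) (P : 'M[C]_(n * n)) : C :=
  (r%:R * n%:R - tP P 1) * (tP P 2 - tP P 3) - (tP P 1 - tP P 2) ^+ 2.
Arguments FP {C} n r P.

From mathcomp Require Import all_boot all_order all_algebra.
From mathcomp Require Import ring.
Set Implicit Arguments. Unset Strict Implicit. Unset Printing Implicit Defensive.
Import Order.TTheory GRing.Theory Num.Theory.
Local Open Scope ring_scope.

(* Put Q = P_1, R = P_2 and A = Q R Q, so that t_k = tr A^k.  With X = (1 - R) Q
   one has X^* X = Q - A, and since Q A = A = A Q, also X^* (X A) = A - A^2 and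
   (X A)^* (X A) = A^2 - A^3.  The Cauchy-Schwarz inequality for the
   Hilbert-Schmidt inner product <X, Y> = tr (X^* Y), applied to X and X A,
   is then exactly (t_1 - t_2)^2 <= (tr Q - t_1)(t_2 - t_3), and tr Q = r n. *)

Lemma mxtrace_idempotent (F : fieldType) n (A : 'M[F]_n) :
  A *m A = A -> \tr A = (\rank A)%:R.
Proof.
move=> AA; rewrite -[in LHS](mulmx_base A) mxtrace_mulC.
suff -> : row_base A *m col_base A = 1%:M by rewrite mxtrace1.
apply: (row_full_inj (col_base_full A)); apply: (row_free_inj (row_base_free A)).
by rewrite mulmx1 mulmxA mulmx_base -mulmxA mulmx_base AA.
Qed.

Lemma mxtrace_tens (R : pzRingType) m p (A : 'M[R]_m) (B : 'M[R]_p) :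
  \tr (A *t B) = \tr A * \tr B.
Proof. by rewrite /mxtrace mulr_sum; apply: eq_bigr => i _; rewrite !mxE. Qed.

Lemma castmx_mulmx (R : pzRingType) m m' (e : m = m') (A B : 'M[R]_m) :
  castmx (e, e) A *m castmx (e, e) B = castmx (e, e) (A *m B).
Proof. by case: m' / e; rewrite !castmx_id. Qed.

Section ComplexMatrices.
Variable C : numClosedFieldType.

Lemma adjmxM m p q (A : 'M[C]_(m, p)) (B : 'M[C]_(p, q)) :
  adjmx (A *m B) = adjmx B *m adjmx A.
Proof.
have adjE k l (M : 'M[C]_(k, l)) : adjmx M = (map_mx Num.conj M)^T.
  by apply/matrixP => i j; rewrite !mxE.
by rewrite !adjE map_mxM trmx_mul.
Qed.

Lemma adjmxB m p (A B : 'M[C]_(m, p)) : adjmx (A - B) = adjmx A - adjmx B.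
Proof. by apply/matrixP => i j; rewrite !mxE rmorphB. Qed.

Lemma adjmx1 m : adjmx (1%:M : 'M[C]_m) = 1%:M.
Proof. by apply/matrixP => i j; rewrite !mxE rmorph_nat eq_sym. Qed.

Lemma adjmx_tens m p q s (A : 'M[C]_(m, p)) (B : 'M[C]_(q, s)) :
  adjmx (A *t B) = adjmx A *t adjmx B.
Proof. by apply/matrixP => i j; rewrite !mxE rmorphM. Qed.

Lemma adjmx_castmx m p m' p' (em : m = m') (ep : p = p') (A : 'M[C]_(m, p)) :
  adjmx (castmx (em, ep) A) = castmx (ep, em) (adjmx A).
Proof. by case: m' / em; case: p' / ep; rewrite !castmx_id. Qed.

Lemma CauchySchwarz_sum (T : finType) (f g : T -> C) :
  (\sum_a (f a)^* * g a) * (\sum_a (g a)^* * f a)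
  <= (\sum_a (f a)^* * f a) * (\sum_a (g a)^* * g a).
Proof.
set ff := \sum_a (f a)^* * f a; set gg := \sum_a (g a)^* * g a.
set fg := \sum_a (f a)^* * g a; set gf := \sum_a (g a)^* * f a.
pose d a b := f a * g b - f b * g a.
have lagrange :
    \sum_a \sum_b d a b * (d a b)^* = ff * gg + gg * ff - (fg * gf + gf * fg).
  rewrite !big_distrlr /= -!big_split -sumrB /=; apply: eq_bigr => a _.
  rewrite -!big_split -sumrB /=; apply: eq_bigr => b _.
  by rewrite /d rmorphB !rmorphM /=; ring.
rewrite -subr_ge0 -(pmulrn_lge0 _ (ltn0Sn 1)).
have -> : (ff * gg - fg * gf) *+ 2 = \sum_a \sum_b d a b * (d a b)^*.
  by rewrite lagrange; ring.
by apply: sumr_ge0 => a _; apply: sumr_ge0 => b _; apply: mul_conjC_ge0.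
Qed.

Lemma mxtrace_CauchySchwarz m p (X Y : 'M[C]_(m, p)) :
  \tr (adjmx X *m Y) * \tr (adjmx Y *m X)
  <= \tr (adjmx X *m X) * \tr (adjmx Y *m Y).
Proof.
have trE (U V : 'M[C]_(m, p)) :
    \tr (adjmx U *m V) = \sum_(q : 'I_p * 'I_m) (U q.2 q.1)^* * V q.2 q.1.
  rewrite /mxtrace -(pair_bigA _ (fun i j => (U j i)^* * V j i)) /=.
  by apply: eq_bigr => i _; rewrite mxE; apply: eq_bigr => j _; rewrite mxE.
by rewrite !trE; apply: CauchySchwarz_sum.
Qed.

Section ProjectionPair.
Variables (m : nat) (Q R : 'M[C]_m).
Hypotheses (adjQ : adjmx Q = Q) (adjR : adjmx R = R).
Hypotheses (QQ : Q *m Q = Q) (RR : R *m R = R).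

Lemma mxtrace_proj_pair :
  (\tr (Q *m R) - \tr (Q *m R *m Q *m R)) ^+ 2
  <= (\tr Q - \tr (Q *m R))
     * (\tr (Q *m R *m Q *m R) - \tr (Q *m R *m Q *m R *m Q *m R)).
Proof.
pose A := Q *m R *m Q; pose X := Q - R *m Q.
have QA : Q *m A = A by rewrite /A !mulmxA QQ.
have AQ : A *m Q = A by rewrite /A -mulmxA QQ.
have adjA : adjmx A = A by rewrite /A !adjmxM adjQ adjR mulmxA.
have XX : adjmx X *m X = Q - A.
  rewrite /X adjmxB adjmxM adjQ adjR !mulmxBl !mulmxBr !mulmxA QQ.
  by rewrite -[Q *m R *m R]mulmxA RR subrr subr0.
have XY : adjmx X *m (X *m A) = A - A *m A by rewrite mulmxA XX mulmxBl QA.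
have YX : adjmx (X *m A) *m X = A - A *m A.
  by rewrite adjmxM adjA -mulmxA XX mulmxBr AQ.
have YY : adjmx (X *m A) *m (X *m A) = A *m A - A *m A *m A.
  by rewrite adjmxM adjA -mulmxA XY mulmxBr !mulmxA.
have trA : \tr A = \tr (Q *m R) by rewrite mxtrace_mulC !mulmxA QQ.
have trA2 : \tr (A *m A) = \tr (Q *m R *m Q *m R).
  by rewrite !mulmxA -[A *m Q]mulmxA QQ mxtrace_mulC !mulmxA QQ.
have trA3 : \tr (A *m A *m A) = \tr (Q *m R *m Q *m R *m Q *m R).
  by rewrite /A !mulmxA -[_ *m Q *m Q]mulmxA QQ -[_ *m Q *m Q]mulmxA QQ
             mxtrace_mulC !mulmxA QQ.
have := mxtrace_CauchySchwarz X (X *m A).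
by rewrite XX XY YX YY !raddfB /= trA trA2 trA3 expr2.
Qed.

End ProjectionPair.
End ComplexMatrices.

Theorem lemma2 (C : numClosedFieldType) (n r : nat) (P : 'M[C]_(n * n)) :
  (2 <= n)%N ->
  adjmx P = P ->
  P *m P = P ->
  \rank P = r ->
  0 <= FP n r P.
Proof.
move=> _ adjP PP rankP.
have adjP1 : adjmx (P1 P) = P1 P by rewrite /P1 adjmx_tens adjP adjmx1.
have adjP2 : adjmx (P2 P) = P2 P by rewrite /P2 adjmx_castmx adjmx_tens adjP adjmx1.
have P1P1 : P1 P *m P1 P = P1 P by rewrite /P1 tensmx_mul PP mulmx1.
have P2P2 : P2 P *m P2 P = P2 P by rewrite /P2 castmx_mulmx tensmx_mul PP mulmx1.
have trP1 : \tr (P1 P) = r%:R * n%:R.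
  by rewrite /P1 mxtrace_tens mxtrace_idempotent // rankP mxtrace1.
have := mxtrace_proj_pair adjP1 adjP2 P1P1 P2P2.
by rewrite /FP subr_ge0 trP1 /tP /= !mulmx1 !mulmxA.
Qed.
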